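(* Let $A$ be an algebra over a field with multiplication $\star$ satisfying the Tortken identity $$(a\star b)\star(c\star d)-(a\star d)\star(c\star b)=(a,b,c)\star d-(a,d,c)\star b\quad\text{for all }a,b,c,d\in A.$$ (i) If $A$ has a right unit (an element $e$ with $a\star e=a$ for all $a$), then $a\star(b\star c+c\star b)=2(a\star b)\star c$ for all $a,b,c\in A$. (ii) If $A$ has a left unit (an element $e$ with $e\star a=a$ for all $a$), then $A$ is associative and commutative.
   Context: The associator is $(a,b,c)=a\star(b\star c)-(a\star b)\star c$. *)

From mathcomp Require Import all_boot all_algebra.
Set Implicit Arguments. Unset Strict Implicit. Unset Printing Implicit Defensive.
Import GRing.Theory.
Local Open Scope ring_scope.

Definition bilinear_mul (K : fieldType) (V : lmodType K) (mul : V -> V -> V) :=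
  (forall (k : K) (a b c : V), mul (k *: a + b) c = k *: mul a c + mul b c) /\
  (forall (k : K) (a b c : V), mul a (k *: b + c) = k *: mul a b + mul a c).

Definition assoc (K : fieldType) (V : lmodType K) (mul : V -> V -> V)
  (a b c : V) : V := mul a (mul b c) - mul (mul a b) c.

Definition tortken (K : fieldType) (V : lmodType K) (mul : V -> V -> V) :=
  forall a b c d : V,
    mul (mul a b) (mul c d) - mul (mul a d) (mul c b)
    = mul (assoc mul a b c) d - mul (assoc mul a d c) b.

(* With a right unit e, the Tortken identity at (a, e, e, d) shows that e is
   invisible inside a right factor, and then the identity at (a, b, c, e)
   reads (a,b,c) = (a*b)*c - a*(c*b), which is (i).  With a left unit e, the
   identity at (e, b, c, d) gives b*(c*d) = d*(c*b); taking c = e yields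
   commutativity, and commutativity turns that cyclic law into associativity. *)
From mathcomp Require Import all_boot all_algebra.
Set Implicit Arguments. Unset Strict Implicit. Unset Printing Implicit Defensive.
Import GRing.Theory.
Local Open Scope ring_scope.

Section TortkenAlgebra.

Variables (K : fieldType) (V : lmodType K) (mul : V -> V -> V).
Hypotheses (Hbil : bilinear_mul mul) (Htk : tortken mul).

Local Notation "a ⋆ b" := (mul a b) (at level 40, left associativity).

Lemma mul0l (c : V) : 0 ⋆ c = 0.
Proof.
have := Hbil.1 1 0 0 c; rewrite !scale1r addr0 => Hc.
by apply/(addrI (0 ⋆ c)); rewrite addr0 -Hc.
Qed.

Lemma mulDr (a b c : V) : a ⋆ (b + c) = a ⋆ b + a ⋆ c.
Proof. by have := Hbil.2 1 a b c; rewrite !scale1r. Qed.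

Section RightUnit.

Variable e : V.
Hypothesis mule1 : forall a, a ⋆ e = a.

Lemma assoc_unitr (a b : V) : assoc mul a b e = 0.
Proof. by rewrite /assoc !mule1 subrr. Qed.

Lemma mul_unitr_inner (a d : V) : a ⋆ (e ⋆ d) = a ⋆ d.
Proof.
have := Htk a e e d; rewrite !assoc_unitr !mul0l subrr !mule1 => /eqP.
by rewrite subr_eq0 => /eqP.
Qed.

Lemma assoc_unitr_mid (a c : V) : assoc mul a e c = 0.
Proof. by rewrite /assoc mul_unitr_inner mule1 subrr. Qed.

Lemma assoc_unitrE (a b c : V) : assoc mul a b c = (a ⋆ b) ⋆ c - a ⋆ (c ⋆ b).
Proof.
by have := Htk a b c e; rewrite assoc_unitr_mid mul0l subr0 !mule1.
Qed.

Lemma mul_symmetrized_unitr (a b c : V) :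
  a ⋆ (b ⋆ c + c ⋆ b) = 2%:R *: ((a ⋆ b) ⋆ c).
Proof.
have := assoc_unitrE a b c; rewrite /assoc => Hsym.
rewrite mulDr scaler_nat mulr2n -[a ⋆ (b ⋆ c)](subrK ((a ⋆ b) ⋆ c)) Hsym.
by rewrite addrAC subrK.
Qed.

End RightUnit.

Section LeftUnit.

Variable e : V.
Hypothesis mul1e : forall a, e ⋆ a = a.

Lemma assoc_unitl (b c : V) : assoc mul e b c = 0.
Proof. by rewrite /assoc !mul1e subrr. Qed.

Lemma mul_unitl_swap (b c d : V) : b ⋆ (c ⋆ d) = d ⋆ (c ⋆ b).
Proof.
have := Htk e b c d; rewrite !assoc_unitl !mul0l subrr !mul1e => /eqP.
by rewrite subr_eq0 => /eqP.
Qed.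

Lemma mulC_unitl (a b : V) : a ⋆ b = b ⋆ a.
Proof. by have := mul_unitl_swap a e b; rewrite !mul1e. Qed.

Lemma mulA_unitl (a b c : V) : a ⋆ (b ⋆ c) = (a ⋆ b) ⋆ c.
Proof. by rewrite mul_unitl_swap mulC_unitl (mulC_unitl b a). Qed.

End LeftUnit.

End TortkenAlgebra.

Theorem mainTheorem2 (K : fieldType) (V : lmodType K) (mul : V -> V -> V)
  (Hbil : bilinear_mul mul) (Htk : tortken mul) :
  ((exists e : V, forall a : V, mul a e = a) ->
     forall a b c : V, mul a (mul b c + mul c b) = 2%:R *: mul (mul a b) c) /\
  ((exists e : V, forall a : V, mul e a = a) ->
     (forall a b c : V, mul a (mul b c) = mul (mul a b) c) /\
     (forall a b : V, mul a b = mul b a)).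
Proof.
split=> [[e mule1] | [e mul1e]].
  exact: mul_symmetrized_unitr Hbil Htk e mule1.
split; [exact: mulA_unitl Hbil Htk e mul1e | exact: mulC_unitl Hbil Htk e mul1e].
Qed.
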